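(* Let $A\in\mathbb{R}^{n\times n}$, $B\in\mathbb{R}^{n\times 1}$ (single-input agents), and let $\mathcal{L}$ be the Laplacian of a weighted directed graph on $N$ nodes with eigenvalues $\lambda_1(\mathcal{L})=0,\lambda_2(\mathcal{L}),\dots,\lambda_N(\mathcal{L})$. Suppose (A1') $(A,B)$ is stabilizable and $$\prod_{j}|\lambda_{j}^{u}(A)|<\frac{1}{\inf_{\omega\in\mathbb{R}}\max_{j\in\{2,\dots,N\}}|1-\omega\lambda_{j}(\mathcal{L})|}.$$ Then (A1) holds: there exists $K\in\mathbb{R}^{1\times n}$ such that all eigenvalues of $A-\lambda_{i}(\mathcal{L})BK$, $i=2,\dots,N$, lie in the open unit disk of the complex plane.
   Context: The Laplacian of a weighted directed graph with adjacency matrix $\mathscr{A}=[a_{ij}]$ ($a_{ii}=0$, $a_{ij}\ge0$) is $\mathcal{L}=\mathrm{diag}(\sum_j a_{1j},\dots,\sum_j a_{Nj})-\mathscr{A}$; its eigenvalues (with multiplicity), ordered by ascending real parts, are $\lambda_1(\mathcal{L})=0,\lambda_2(\mathcal{L}),\dots,\lambda_N(\mathcal{L})$. The numbers $\lambda_j^u(A)$ are the unstable eigenvalues of $A$ (those on or outside the unit circle); if $\rho(A)<1$ (spectral radius), the product $\prod_j|\lambda_j^u(A)|$ is defined to be $0$. *)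

From HB Require Import structures.
From mathcomp Require Import all_boot all_order all_algebra.
From mathcomp Require Import complex.
From mathcomp Require Import classical_sets reals.
Set Implicit Arguments. Unset Strict Implicit. Unset Printing Implicit Defensive.
Import Order.TTheory GRing.Theory Num.Theory.
Local Open Scope ring_scope.

Definition laplacian (R : pzRingType) (N : nat) (Ad : 'M[R]_N) : 'M[R]_N :=
  \matrix_(i, j) ((i == j)%:R * (\sum_(k < N) Ad i k)) - Ad.

Definition cmx (R : rcfType) (m n : nat) (M : 'M[R]_(m, n)) : 'M[R[i]]_(m, n) :=
  map_mx (fun x : R => x%:C%C) M.

(* eigenvalues of a complex square matrix, listed with algebraic multiplicity:
   the roots (with multiplicity) of its characteristic polynomial. *)
Definition eigs (R : rcfType) (n : nat) (M : 'M[R[i]]_n) : seq R[i] :=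
  sval (closed_field_poly_normal (char_poly M)).

Definition cabs (R : rcfType) (z : R[i]) : R := Normc.normc z.

Definition schur_stable (R : rcfType) (n : nat) (M : 'M[R[i]]_n) : Prop :=
  forall z : R[i], z \in eigs M -> cabs z < 1.

Definition stabilizable (R : rcfType) (n m : nat)
    (A : 'M[R]_n) (B : 'M[R]_(n, m)) : Prop :=
  exists K : 'M[R]_(m, n), schur_stable (cmx (A - B *m K)).

(* prod_j |lambda_j^u(A)| over the unstable eigenvalues (|lambda| >= 1), with
   multiplicity; defined to be 0 when rho(A) < 1 (no unstable eigenvalue). *)
Definition unstable_prod (R : rcfType) (n : nat) (A : 'M[R]_n) : R :=
  let e := eigs (cmx A) in
  if has (fun z => 1 <= cabs z) e
  then \prod_(z <- e | 1 <= cabs z) cabs z else 0.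

(* lambda_2(L), ..., lambda_N(L): the eigenvalues of L with multiplicity,
   with one copy of lambda_1(L) = 0 removed. *)
Definition lap_eigs_nz (R : rcfType) (N : nat) (L : 'M[R]_N) : seq R[i] :=
  rem 0 (eigs (cmx L)).

(* gamma = inf_{omega in R} max_{j in 2..N} |1 - omega lambda_j(L)|
   (the max over an empty index set is taken to be 0) *)
Definition lap_gamma (R : realType) (N : nat) (L : 'M[R]_N) : R :=
  inf [set y : R | exists w : R,
         y = \big[Num.max/0]_(z <- lap_eigs_nz L) cabs (1 - w%:C%C * z)].

From HB Require Import structures.
From mathcomp Require Import all_boot all_order all_algebra.
From mathcomp Require Import complex.
From mathcomp Require Import boolp classical_sets reals.
From mathcomp Require Import ring lra zify.
Set Implicit Arguments. Unset Strict Implicit. Unset Printing Implicit Defensive.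
Import Order.TTheory GRing.Theory Num.Theory.
Local Open Scope ring_scope.

(* A gain K changes the characteristic polynomial of A - s B K into
   chi_A + s k_K (matrix determinant lemma).  Let p be the monic polynomial of
   least degree r with p(A) B = 0; then chi_A = a p, the attainable k_K are
   exactly the a g with deg g < r, and stabilizability puts the roots of a in
   the open unit disk.  Given M > prod |lambda^u(A)|, reflect the unstable
   roots of p into the disk to get a real monic d of degree r with
   |p(z)| <= M |d(z)| for |z| >= 1, and choose k_K = c a (d - p) with
   c = M^2 / (M^2 - 1).  Then chi(A - s B K) = a (p + c s (d - p)), and
   whenever M |1 - s| < 1 the number tau = c s satisfies M |tau - 1| < |tau|,
   which leaves no root outside the disk.  Finally choose omega with
   M max_j |1 - omega lambda_j(L)| < 1 and use the gain omega K. *)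

Lemma det_add_rank1 (F : idomainType) n (M : 'M[F]_n) (u : 'cV_n) (v : 'rV_n) :
  \det M != 0 -> \det (M + u *m v) = \det M + (v *m \adj M *m u) 0 0.
Proof.
move=> detM_neq0; set d := \det M; set w := v *m \adj M.
(* Two factorisations of the bordered matrix [[M, -u], [v, 1]]. *)
pose P := block_mx M (-u) v (1%:M : 'M_1).
have detP : \det P = \det (M + u *m v).
  have -> : P = block_mx 1%:M (-u) 0 1%:M *m block_mx (M + u *m v) 0 v 1%:M.
    by rewrite mulmx_block !mul1mx !mul0mx !mulmx1 ?add0r ?addr0 mulNmx addrK.
  by rewrite det_mulmx det_ublock det_lblock !det1 !mul1r mulr1.
have PadjM : P *m block_mx (\adj M) (\adj M *m u) 0 (d%:M : 'M_1)
             = block_mx d%:M 0 w (w *m u + d%:M).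
  rewrite mulmx_block !mulmx0 !addr0 mulmxA mul_mx_adj mul1mx.
  by rewrite mul_scalar_mx mul_mx_scalar scalerN addrN mulmxA.
have detM_adj : d * \det (\adj M) = d ^+ n.
  by rewrite -det_mulmx mul_mx_adj det_scalar.
have := congr1 determinant PadjM.
rewrite det_mulmx det_ublock det_lblock det_scalar1 det_scalar !det_mx11 detP.
rewrite [(w *m u + _) 0 0]mxE [d%:M _ _]mxE eqxx mulr1n => eq_det.
rewrite [RHS]addrC; apply: (mulIf (expf_neq0 n detM_neq0)).
by rewrite [RHS]mulrC -eq_det -detM_adj; ring.
Qed.

Definition feedback_poly (R : comNzRingType) n
    (A : 'M[R]_n) (B : 'cV[R]_n) (K : 'rV[R]_n) : {poly R} :=
  (map_mx polyC K *m \adj (char_poly_mx A) *m map_mx polyC B) 0 0.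

Lemma char_poly_sub_rank1 (F : fieldType) n (A : 'M[F]_n) (B : 'cV_n) (K : 'rV_n) :
  char_poly (A - B *m K) = char_poly A + feedback_poly A B K.
Proof.
rewrite /char_poly; have -> : char_poly_mx (A - B *m K)
          = char_poly_mx A + map_mx polyC B *m map_mx polyC K.
  by rewrite /char_poly_mx map_mxB map_mxM opprD opprK addrA.
by rewrite det_add_rank1 // monic_neq0 ?char_poly_monic.
Qed.

Lemma char_poly_map_feedback (F L : fieldType) (f : {rmorphism F -> L}) n
    (A : 'M[F]_n) (B : 'cV_n) (K : 'rV_n) (s : L) :
  char_poly (map_mx f A - s *: (map_mx f B *m map_mx f K)) =
  map_poly f (char_poly A) + s%:P * map_poly f (feedback_poly A B K).
Proof.
rewrite scalemxAl char_poly_sub_rank1 -map_char_poly /feedback_poly; congr (_ + _).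
have polyC_map m p (X : 'M[F]_(m, p)) :
    map_mx polyC (map_mx f X) = map_mx (map_poly f) (map_mx polyC X).
  by apply/matrixP => i j; rewrite !mxE map_polyC.
have polyC_scale m p (X : 'M[L]_(m, p)) :
    map_mx polyC (s *: X) = s%:P *: map_mx polyC X.
  by apply/matrixP => i j; rewrite !mxE polyCM.
rewrite polyC_scale -scalemxAr [LHS]mxE !polyC_map -map_char_poly_mx -map_mx_adj.
by rewrite -!map_mxM mxE.
Qed.

Lemma drop_poly_free (F : idomainType) (p : {poly F}) r (v : 'rV_r) :
  size p = r.+1 -> \sum_(j < r) v 0 j *: drop_poly j.+1 p = 0 -> v = 0.
Proof.
move=> size_p sum_eq0.
have lead_neq0 : p`_r != 0.
  by rewrite -[r]/(r.+1.-1) -size_p -lead_coefE lead_coef_eq0 -size_poly_eq0 size_p.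
have coef_sum_eq0 i : \sum_(j < r) v 0 j * p`_(i + j.+1) = 0.
  transitivity ((\sum_(j < r) v 0 j *: drop_poly j.+1 p)`_i).
    by rewrite coef_sum; apply: eq_bigr => j _; rewrite coefZ coef_drop_poly.
  by rewrite sum_eq0 coef0.
suff vanish m (k : 'I_r) : k = m :> nat -> v 0 k = 0.
  by apply/rowP => k; rewrite mxE (vanish k).
elim/ltn_ind: m k => m IH k km.
(* The coefficient of X^(r-1-k) isolates v_k: lower indices vanish by induction,
   higher ones fall beyond the degree of p. *)
have := coef_sum_eq0 (r.-1 - k)%N; rewrite (bigD1 k) //= big1 => [|j jk].
  rewrite addr0 (_ : r.-1 - k + k.+1 = r)%N; last by have := ltn_ord k; lia.
  by move/eqP; rewrite mulf_eq0 (negPf lead_neq0) orbF => /eqP.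
have [j_lt_k|k_le_j] := ltnP j k; first by rewrite (IH j) ?mul0r // -km.
have j_neq_k : (j : nat) != k by apply: contraNneq jk => /val_inj ->.
rewrite nth_default ?mulr0 // size_p; have := ltn_ord k; lia.
Qed.

Lemma drop_polyS (R : nzRingType) m (p : {poly R}) :
  drop_poly m p = (p`_m)%:P + 'X * drop_poly m.+1 p.
Proof.
apply/polyP => i; rewrite coefD coefXM coefC !coef_drop_poly.
by case: i => [|i] /=; rewrite ?add0n ?addr0 ?add0r // addSnnS.
Qed.

Section ControllablePart.
Variables (F : fieldType) (n' : nat).
Local Notation n := n'.+1.
Variables (A : 'M[F]_n) (B : 'cV[F]_n).

Lemma exists_min_annihilator : exists p r, [/\ p \is monic, size p = r.+1,
  horner_mx A p *m B = 0 &
  forall q : {poly F}, (size q <= r)%N -> horner_mx A q *m B = 0 -> q = 0].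
Proof.
pose annih k := `[< exists2 q, q \is monic /\ size q = k.+1 & horner_mx A q *m B = 0 >].
have annih_n : annih n.
  apply/asboolP; exists (char_poly A); last by rewrite Cayley_Hamilton mul0mx.
  by rewrite char_poly_monic size_char_poly.
have [r /asboolP [p [p_monic size_p] p_annih] r_min] := ex_minnP (ex_intro annih n annih_n).
exists p, r; split => // q size_q q_annih; apply: contraTeq size_q => q_neq0.
have lq_neq0 : lead_coef q != 0 by rewrite lead_coef_eq0.
rewrite -ltnNge -(prednK (_ : 0 < size q)%N) ?size_poly_gt0 // ltnS.
apply: r_min; apply/asboolP.
exists ((lead_coef q)^-1 *: q); last by rewrite horner_mxZ -scalemxAl q_annih scaler0.
rewrite monicE lead_coefZ mulVf // size_scale ?invr_eq0 //.
by rewrite prednK // size_poly_gt0.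
Qed.

Section MinAnnihilator.
Variables (p : {poly F}) (r : nat).
Hypotheses (p_monic : p \is monic) (size_p : size p = r.+1)
  (p_annih : horner_mx A p *m B = 0)
  (p_min : forall q : {poly F}, (size q <= r)%N -> horner_mx A q *m B = 0 -> q = 0).

Lemma min_annihilator_dvdp q : horner_mx A q *m B = 0 -> p %| q.
Proof.
move=> q_annih; apply/modp_eq0P; apply: p_min.
  by rewrite -ltnS -size_p ltn_modp monic_neq0.
move: q_annih; rewrite {1}(divp_eq q p) rmorphD rmorphM /= mulmxDl -mulmxA.
by rewrite p_annih mulmx0 add0r.
Qed.

Definition ctrl_vec j : 'cV[F]_n := horner_mx A (drop_poly j.+1 p) *m B.

Lemma ctrl_vec_eq0 j : (r <= j)%N -> ctrl_vec j = 0.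
Proof. by move=> rj; rewrite /ctrl_vec drop_poly_eq0 ?rmorph0 ?mul0mx // size_p. Qed.

Lemma horner_drop_poly m :
  horner_mx A (drop_poly m p) *m B = p`_m *: B + A *m ctrl_vec m.
Proof.
rewrite drop_polyS rmorphD rmorphM /= horner_mx_C horner_mx_X.
by rewrite mulmxDl mul_scalar_mx -mulmxA.
Qed.

Definition ctrl_mx : 'M[F]_(r, n) := \matrix_(j < r, i < n) ctrl_vec j i 0.

Lemma ctrl_mx_free : row_free ctrl_mx.
Proof.
apply/inj_row_free => v v_ctrl; apply: (drop_poly_free size_p); apply: p_min.
  rewrite (leq_trans (size_sum _ _ _)) //; apply/bigmax_leqP => j _.
  by rewrite (leq_trans (size_scale_leq _ _)) // size_drop_poly size_p subSS leq_subr.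
rewrite raddf_sum mulmx_suml; transitivity (v *m ctrl_mx)^T.
  apply/colP => i; rewrite summxE !mxE; apply: eq_bigr => j _.
  by rewrite -[_ (v 0 j *: _)]/(horner_mx A (v 0 j *: _)) horner_mxZ -scalemxAl !mxE.
by rewrite v_ctrl trmx0.
Qed.

Lemma ctrl_functional_surj (g : {poly F}) : (size g <= r)%N ->
  exists K : 'rV[F]_n, forall j, (K *m ctrl_vec j) 0 0 = g`_j.
Proof.
move=> size_g; have /row_freeP [X ctrl_X] := ctrl_mx_free.
exists (X *m \col_(j < r) g`_j)^T => j.
have [jr|rj] := ltnP j r; last first.
  by rewrite ctrl_vec_eq0 // mulmx0 mxE nth_default // (leq_trans size_g).
rewrite -[RHS](_ : (ctrl_mx *m (X *m \col_(j < r) g`_j)) (Ordinal jr) 0 = g`_j).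
  by rewrite !mxE; apply: eq_bigr => i _; rewrite !mxE mulrC.
by rewrite mulmxA ctrl_X mul1mx mxE.
Qed.

Definition ctrl_col : 'cV[{poly F}]_n := \col_i \poly_(j < r) ctrl_vec j i 0.

Lemma coef_poly_ctrl_vec i m : (\poly_(j < r) ctrl_vec j i 0)`_m = ctrl_vec m i 0.
Proof. by rewrite coef_poly; case: ltnP => // rm; rewrite ctrl_vec_eq0 // mxE. Qed.

Lemma char_poly_mx_ctrl_col : char_poly_mx A *m ctrl_col = p *: map_mx polyC B.
Proof.
rewrite /char_poly_mx mulmxBl mul_scalar_mx; apply/colP => i; rewrite !mxE.
apply/polyP => m; rewrite coefB coefXM coefMC coef_sum coef_poly_ctrl_vec.
under eq_bigr do rewrite !mxE coefCM coef_poly_ctrl_vec.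
have := congr1 (fun M : 'cV_n => M i 0) (horner_drop_poly m).
case: m => [|m] /=; last by rewrite -/(ctrl_vec m) !mxE => ->; rewrite addrK.
rewrite drop_poly0l p_annih !mxE => /eqP; rewrite eq_sym addr_eq0 => /eqP ->.
by rewrite sub0r.
Qed.

Definition ctrl_poly (K : 'rV[F]_n) : {poly F} := (map_mx polyC K *m ctrl_col) 0 0.

Lemma coef_ctrl_poly K m : (ctrl_poly K)`_m = (K *m ctrl_vec m) 0 0.
Proof.
rewrite /ctrl_poly mxE coef_sum [RHS]mxE.
apply: eq_bigr => k _.
by rewrite [map_mx _ _ _ _]mxE coefCM [ctrl_col _ _]mxE coef_poly_ctrl_vec.
Qed.

Lemma ctrl_poly_surj (g : {poly F}) : (size g <= r)%N -> exists K, ctrl_poly K = g.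
Proof.
move=> /ctrl_functional_surj [K K_ctrl].
by exists K; apply/polyP => m; rewrite coef_ctrl_poly K_ctrl.
Qed.

Lemma char_poly_ctrl_poly K :
  char_poly A * ctrl_poly K = p * feedback_poly A B K.
Proof.
have adj_ctrl_col : char_poly A *: ctrl_col
                    = p *: (\adj (char_poly_mx A) *m map_mx polyC B).
  by rewrite -mul_scalar_mx -mul_adj_mx -mulmxA char_poly_mx_ctrl_col scalemxAr.
have := congr1 (fun M => (map_mx polyC K *m M) 0 0) adj_ctrl_col.
by rewrite /= -!scalemxAr ![fun_of_matrix (_ *: _) _ _]mxE /feedback_poly -mulmxA.
Qed.

Lemma char_poly_factor : exists2 a, char_poly A = a * p &
  forall K, feedback_poly A B K = a * ctrl_poly K.
Proof.
have p_dvd : p %| char_poly A.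
  by apply: min_annihilator_dvdp; rewrite Cayley_Hamilton mul0mx.
exists (char_poly A %/ p); first by rewrite divpK.
move=> K; apply: (mulfI (monic_neq0 p_monic)).
by rewrite -char_poly_ctrl_poly -{1}(divpK p_dvd) [LHS]mulrAC [LHS]mulrC.
Qed.

End MinAnnihilator.

Lemma controllable_decomposition : exists (p a : {poly F}) (r : nat),
  [/\ p \is monic, size p = r.+1, char_poly A = a * p,
      forall K, exists g : {poly F}, feedback_poly A B K = a * g &
      forall g : {poly F}, (size g <= r)%N -> exists K, feedback_poly A B K = a * g].
Proof.
have [p [r [p_monic size_p p_annih p_min]]] := exists_min_annihilator.
have [a char_eq feedback_eq] := char_poly_factor p_monic size_p p_annih p_min.
exists p, a, r; split => // [K | g /(ctrl_poly_surj size_p p_min) [K <-]].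
  by exists (ctrl_poly p r K).
by exists K.
Qed.

End ControllablePart.

Local Open Scope complex_scope.

Section Modulus.
Variable R : rcfType.
Implicit Types (a b : R) (z u : R[i]).

Lemma cabs_sqr a b : cabs (a +i* b) ^+ 2 = a ^+ 2 + b ^+ 2.
Proof. by rewrite sqr_sqrtr // addr_ge0 // sqr_ge0. Qed.

Lemma cabs_ge0 z : 0 <= cabs z.
Proof. by case: z => a b; apply: sqrtr_ge0. Qed.

Lemma cabsM z u : cabs (z * u) = cabs z * cabs u.
Proof. exact: Normc.normcM. Qed.

Lemma cabs_prod (I : Type) (s : seq I) (f : I -> R[i]) :
  cabs (\prod_(i <- s) f i) = \prod_(i <- s) cabs (f i).
Proof.
elim: s => [|x s IH]; first by rewrite !big_nil /cabs Normc.normc1.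
by rewrite !big_cons cabsM IH.
Qed.

Lemma cabsJ z : cabs (conjc z) = cabs z.
Proof. by case: z => a b; rewrite /cabs /= sqrrN. Qed.

Lemma cabs_real a : cabs a%:C = `|a|.
Proof. by rewrite /cabs /= expr0n addr0 sqrtr_sqr. Qed.

Lemma cabs_gt0 z : (0 < cabs z) = (z != 0).
Proof.
rewrite lt_neqAle cabs_ge0 andbT eq_sym; congr negb.
by apply/eqP/eqP => [/Normc.eq0_normc | ->] //; apply: Normc.normc0.
Qed.

End Modulus.

Section Contraction.
Variable R : rcfType.
Implicit Types (rho : R) (z u : R[i]).

Lemma reflect_dist_le rho u z : 1 <= cabs u -> 1 <= cabs z -> 0 < rho -> rho <= 1 ->
  rho * cabs (z - u) <= cabs u * cabs (z - (rho / cabs u ^+ 2)%:C * u).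
Proof.
case: u => p q; case: z => x y; set a := cabs _; set b := cabs _.
move=> a_ge1 b_ge1 rho_gt0 rho_le1.
have a2 : a ^+ 2 = p ^+ 2 + q ^+ 2 by rewrite cabs_sqr.
have b2 : b ^+ 2 = x ^+ 2 + y ^+ 2 by rewrite cabs_sqr.
have a_gt0 : 0 < a by apply: lt_le_trans a_ge1.
set k := rho / a ^+ 2.
have -> : (x +i* y) - (p +i* q) = (x - p) +i* (y - q) by simpc.
have -> : (x +i* y) - k%:C * (p +i* q) = (x - k * p) +i* (y - k * q) by simpc.
rewrite -(ler_pXn2r (isT : (0 < 2)%N)) ?nnegrE ?mulr_ge0 ?cabs_ge0 ?(ltW rho_gt0) //.
rewrite !exprMn !cabs_sqr -a2; set S := p * x + q * y.
(* After squaring, with S = Re (conj u * z) <= |u| |z|, the difference of the two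
   sides is a sum of nonnegative terms. *)
have -> : a ^+ 2 * ((x - k * p) ^+ 2 + (y - k * q) ^+ 2) =
          a ^+ 2 * b ^+ 2 - 2 * rho * S + rho ^+ 2.
  by rewrite b2 /k /S a2; field; rewrite -a2 expf_neq0 // gt_eqF.
have -> : rho ^+ 2 * ((x - p) ^+ 2 + (y - q) ^+ 2) =
          rho ^+ 2 * (b ^+ 2 - 2 * S + a ^+ 2) by rewrite a2 b2 /S; ring.
have S_le : S <= a * b.
  have : S ^+ 2 <= (a * b) ^+ 2.
    rewrite exprMn a2 b2 /S -subr_ge0.
    have -> : (p ^+ 2 + q ^+ 2) * (x ^+ 2 + y ^+ 2) - (p * x + q * y) ^+ 2
              = (p * y - q * x) ^+ 2 by ring.
    exact: sqr_ge0.
  have : 0 <= a * b by rewrite mulr_ge0 // ltW // (lt_le_trans ltr01).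
  nra.
rewrite -subr_ge0.
have -> : a ^+ 2 * b ^+ 2 - 2 * rho * S + rho ^+ 2 - rho ^+ 2 * (b ^+ 2 - 2 * S + a ^+ 2)
    = (b * (a - rho) + rho * (a - 1)) * (a * (b - rho) + rho * (b - 1))
      + 2 * (rho * (1 - rho) * (a * b - S)) by ring.
by rewrite addr_ge0 ?mulr_ge0 //; nra.
Qed.

(* Unstable roots u are replaced by rho / conj u, of modulus rho / |u| < 1. *)
Definition contract_root rho u : R[i] :=
  if 1 <= cabs u then (rho / cabs u ^+ 2)%:C * u else u.

Lemma cabs_contract_root_lt1 rho u : 0 < rho -> rho < 1 ->
  cabs (contract_root rho u) < 1.
Proof.
rewrite /contract_root => rho_gt0 rho_lt1; case: ifP => [u_ge1|]; last first.
  by move/negbT; rewrite -ltNge.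
have u_gt0 : 0 < cabs u by apply: lt_le_trans u_ge1.
rewrite cabsM cabs_real ger0_norm ?divr_ge0 ?exprn_ge0 ?ltW //.
rewrite expr2 invfM mulrA -mulrA mulVf ?gt_eqF // mulr1.
by rewrite ltr_pdivrMr // mul1r (lt_le_trans rho_lt1).
Qed.

Lemma contract_rootJ rho u : conjc (contract_root rho u) = contract_root rho (conjc u).
Proof.
by rewrite /contract_root cabsJ; case: ifP => // _; rewrite rmorphM /= oppr0.
Qed.

Lemma dist_contract_root rho u z : 0 < rho -> rho <= 1 -> 1 <= cabs z ->
  cabs (z - u) <=
  (if 1 <= cabs u then cabs u / rho else 1) * cabs (z - contract_root rho u).
Proof.
rewrite /contract_root => rho_gt0 rho_le1 z_ge1; case: ifP => u_ge1; last by rewrite mul1r.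
rewrite -(ler_pM2l rho_gt0) mulrA mulrCA mulfV ?gt_eqF // mulr1.
exact: reflect_dist_le.
Qed.

End Contraction.

Lemma sensitivity_scale (R : rcfType) (M : R) (s : R[i]) :
  let c := M ^+ 2 / (M ^+ 2 - 1) in
  1 < M -> M * cabs (1 - s) < 1 -> M * cabs (c%:C * s - 1) < cabs (c%:C * s).
Proof.
case: s => x y c M_gt1 Ms_lt1.
have M_gt0 : 0 < M by apply: lt_trans M_gt1.
have M2_gt1 : 1 < M ^+ 2 by rewrite expr_gt1 // ltW.
have c_gt0 : 0 < c by rewrite divr_gt0 ?subr_gt0 // (lt_trans ltr01).
rewrite -(ltr_pXn2r (isT : (0 < 2)%N)) ?nnegrE ?mulr_ge0 ?cabs_ge0 ?(ltW M_gt0) //.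
have -> : c%:C * (x +i* y) - 1 = (c * x - 1) +i* (c * y) by simpc.
have -> : c%:C * (x +i* y) = (c * x) +i* (c * y) by simpc.
have : (M * cabs ((1 - x) +i* (- y))) ^+ 2 < 1.
  have -> : (1 - x) +i* (- y) = 1 - x +i* y by simpc.
  by rewrite expr_lt1 // mulr_ge0 ?cabs_ge0 // ltW.
rewrite !exprMn !cabs_sqr -subr_gt0 -(subr_gt0 (_ * _)) => sens_gt0.
(* c is chosen so that |c s|^2 - M^2 |c s - 1|^2 = c (1 - M^2 |1 - s|^2). *)
have -> : (c * x) ^+ 2 + (c * y) ^+ 2 - M ^+ 2 * ((c * x - 1) ^+ 2 + (c * y) ^+ 2)
          = c * (1 - M ^+ 2 * ((1 - x) ^+ 2 + (- y) ^+ 2)).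
  by rewrite /c; field; rewrite subr_eq0 gt_eqF.
exact: mulr_gt0.
Qed.

Lemma bernoulli_ineq (R : realFieldType) (x : R) m :
  0 <= x <= 1 -> 1 - m%:R * x <= (1 - x) ^+ m.
Proof.
move=> /andP [x_ge0 x_le1]; elim: m => [|m IH]; first by rewrite mul0r subr0.
have x_le1' : 0 <= 1 - x by lra.
have := ler_wpM2r x_le1' IH; have : 0 <= m%:R :> R by [].
by rewrite exprSr -natr1; nra.
Qed.

Lemma exists_contraction (R : realFieldType) (P M : R) m : 0 < P -> P < M ->
  exists rho : R, [/\ 0 < rho, rho < 1 & P <= M * rho ^+ m].
Proof.
move=> P_gt0 PM; have M_gt0 : 0 < M by apply: lt_trans PM.
pose q := P / M; have q_gt0 : 0 < q by rewrite divr_gt0.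
have q_lt1 : q < 1 by rewrite ltr_pdivrMr // mul1r.
pose x := (1 - q) / m.+1%:R.
have xm : x * (m%:R + 1) = 1 - q by rewrite /x natr1 divfK // pnatr_eq0.
have m_ge0 : 0 <= m%:R :> R by [].
have x_gt0 : 0 < x by rewrite divr_gt0 // subr_gt0.
have x_lt1 : x < 1 by nra.
exists (1 - x); split; [lra | lra |].
rewrite (_ : P = M * q); last by rewrite /q mulrCA mulfV ?gt_eqF ?mulr1.
apply: ler_wpM2l; first exact: ltW.
apply: le_trans (bernoulli_ineq m (_ : 0 <= x <= 1)); first by nra.
by apply/andP; split; nra.
Qed.

Lemma prod_if_div (F : fieldType) (I : Type) (s : seq I) (P : pred I)
    (f : I -> F) (rho : F) : rho != 0 ->
  (\prod_(i <- s) (if P i then f i / rho else 1)) * rho ^+ count P s =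
  \prod_(i <- s | P i) f i.
Proof.
move=> rho_neq0; elim: s => [|x s IH]; first by rewrite !big_nil mulr1.
rewrite !big_cons /=; case: (P x) => /=; last by rewrite mul1r.
by rewrite exprS -IH; field.
Qed.

Definition poly_roots (C : closedFieldType) (P : {poly C}) : seq C :=
  sval (closed_field_poly_normal P).

Lemma poly_rootsE (C : closedFieldType) (P : {poly C}) :
  P \is monic -> P = \prod_(z <- poly_roots P) ('X - z%:P).
Proof.
move=> P_monic; rewrite -[RHS]scale1r -(monicP P_monic).
exact: svalP (closed_field_poly_normal P).
Qed.

Lemma root_poly_roots (C : closedFieldType) (P : {poly C}) z :
  P \is monic -> root P z = (z \in poly_roots P).
Proof. by move=> P_monic; rewrite {1}(poly_rootsE P_monic) root_prod_XsubC. Qed.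

Lemma mem_eigs (R : rcfType) n (M : 'M[R[i]]_n) z : (z \in eigs M) = root (char_poly M) z.
Proof. by rewrite root_poly_roots ?char_poly_monic. Qed.

Lemma schur_stable0 (R : rcfType) (M : 'M[R[i]]_0) : schur_stable M.
Proof. by move=> z; rewrite mem_eigs /char_poly det_mx00 rootC oner_eq0. Qed.

Lemma poly_roots_conj (R : rcfType) (p : {poly R}) : p \is monic ->
  perm_eq (map conjc (poly_roots (map_poly (real_complex R) p)))
          (poly_roots (map_poly (real_complex R) p)).
Proof.
rewrite -(map_monic (real_complex R)) => pc_monic.
apply: prod_XsubC_eq; rewrite big_map -(map_prod_XsubC conjc) -poly_rootsE //.
by rewrite -map_poly_comp; apply: eq_map_poly => y /=; rewrite oppr0.
Qed.

Lemma conjc_fixed_poly (R : rcfType) (P : {poly R[i]}) :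
  map_poly conjc P = P -> exists Q : {poly R}, map_poly (real_complex R) Q = P.
Proof.
move=> P_real; exists (\poly_(i < size P) complex.Re P`_i).
apply/polyP => i; rewrite coef_map /= coef_poly.
case: ltnP => [_|Pi]; last by rewrite nth_default.
have := congr1 (fun Q : {poly R[i]} => Q`_i) P_real; rewrite /= coef_map /=.
by case: (P`_i) => a b /= [b0]; congr (_ +i* _); lra.
Qed.

Lemma size_monicB_lt (R : nzRingType) (p q : {poly R}) :
  p \is monic -> q \is monic -> size p = size q -> (size (p - q)%R < size p)%N.
Proof.
move=> p_monic q_monic size_pq.
have size_p_gt0 : (0 < size p)%N by rewrite size_poly_gt0 monic_neq0.
rewrite -(prednK size_p_gt0) ltnS; apply/leq_sizeP => j pj; rewrite coefB.
have [->|pj'] := eqVneq j (size p).-1.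
  by rewrite -lead_coefE [in X in _ - X]size_pq -lead_coefE !(monicP _) ?subrr.
have pj2 : (size p <= j)%N by rewrite -(prednK size_p_gt0) ltn_neqAle eq_sym pj' pj.
by rewrite !nth_default ?subrr // -size_pq.
Qed.

Lemma prod_cabs_ge1 (R : rcfType) (s : seq R[i]) :
  1 <= \prod_(z <- s | 1 <= cabs z) cabs z.
Proof. by apply: (big_ind (fun x => 1 <= x)) => // x y; apply: mulr_ege1. Qed.

Lemma root_homotopy_stable (R : rcfType) (P D : {poly R[i]}) (M : R) (tau : R[i]) :
  (forall z, root D z -> cabs z < 1) ->
  (forall z, 1 <= cabs z -> cabs P.[z] <= M * cabs D.[z]) ->
  M * cabs (tau - 1) < cabs tau ->
  forall z, root (P + tau%:P * (D - P)) z -> cabs z < 1.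
Proof.
move=> D_stable PD_bound tau_sens z; rewrite /root !hornerE => /eqP root_z.
rewrite ltNge; apply/negP => z_ge1.
have Dz_gt0 : 0 < cabs D.[z].
  rewrite cabs_gt0; apply: contraTneq z_ge1 => Dz0.
  by rewrite -ltNge D_stable // /root Dz0.
have eq_cabs : cabs P.[z] * cabs (tau - 1) = cabs tau * cabs D.[z].
  rewrite -!cabsM; congr cabs; apply/eqP; rewrite -subr_eq0; apply/eqP.
  by rewrite -[RHS]oppr0 -root_z; ring.
suff : cabs tau * cabs D.[z] < cabs tau * cabs D.[z] by rewrite ltxx.
rewrite -{1}eq_cabs; apply: le_lt_trans (ler_wpM2r (cabs_ge0 _) (PD_bound z z_ge1)) _.
by rewrite mulrAC ltr_pM2r.
Qed.

Section TargetPoly.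
Variable R : rcfType.
Local Notation rc := (real_complex R).

Lemma exists_target_poly (p : {poly R}) (M : R) : p \is monic ->
  \prod_(u <- poly_roots (map_poly rc p) | 1 <= cabs u) cabs u < M ->
  exists d : {poly R}, [/\ d \is monic, size d = size p,
    forall z, root (map_poly rc d) z -> cabs z < 1 &
    forall z, 1 <= cabs z -> cabs (map_poly rc p).[z] <= M * cabs (map_poly rc d).[z]].
Proof.
move=> p_monic unst_lt; have pc_monic : map_poly rc p \is monic by rewrite map_monic.
set s := poly_roots _ in unst_lt *; set U := bigop.body _ _ _ in unst_lt.
have U_gt0 : 0 < U by apply: lt_le_trans (prod_cabs_ge1 s).
(* rho is chosen so that the distortion factors |u| / rho of the reflected
   roots multiply to at most M. *)
have [rho [rho_gt0 rho_lt1 U_le]] :=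
  exists_contraction (count (fun u => 1 <= cabs u) s) U_gt0 unst_lt.
pose dc := \prod_(v <- map (contract_root rho) s) ('X - v%:P).
have dc_real : map_poly conjc dc = dc.
  rewrite /dc map_prod_XsubC !big_map.
  rewrite (eq_bigr (fun u => 'X - (contract_root rho (conjc u))%:P)) => [|u _]; last first.
    by rewrite -contract_rootJ.
  rewrite -(big_map conjc predT (fun u => 'X - (contract_root rho u)%:P)).
  exact: perm_big (poly_roots_conj p_monic).
have [d dE] := conjc_fixed_poly dc_real.
exists d; split.
- by rewrite -(map_monic rc) dE monic_prod_XsubC.
- rewrite -(size_map_poly rc d) -(size_map_poly rc p) dE (poly_rootsE pc_monic).
  by rewrite !size_prod_XsubC size_map.
- by move=> z; rewrite dE root_prod_XsubC => /mapP [u _ ->]; apply: cabs_contract_root_lt1.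
move=> z z_ge1; rewrite dE {1}(poly_rootsE pc_monic) !horner_prod big_map !cabs_prod.
under eq_bigr do rewrite hornerXsubC.
under [X in _ <= _ * X]eq_bigr do rewrite hornerXsubC.
pose g u := if 1 <= cabs u then cabs u / rho else 1.
apply: le_trans (_ : \prod_(u <- s) (g u * cabs (z - contract_root rho u)) <= _).
  apply: ler_prod => u _; rewrite cabs_ge0.
  exact: dist_contract_root rho_gt0 (ltW rho_lt1) z_ge1.
rewrite big_split /=; apply: ler_wpM2r; first by apply: prodr_ge0 => u _; apply: cabs_ge0.
have rho_m_gt0 : 0 < rho ^+ count (fun u => 1 <= cabs u) s by apply: exprn_gt0.
by rewrite -(ler_pM2r rho_m_gt0) prod_if_div ?gt_eqF.
Qed.

End TargetPoly.

Lemma cmxE (R : rcfType) m n (M : 'M[R]_(m, n)) : cmx M = map_mx (real_complex R) M.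
Proof. by []. Qed.

Section Stabilization.
Variables (R : rcfType) (n' : nat).
Local Notation n := n'.+1.
Local Notation rc := (real_complex R).
Variables (A : 'M[R]_n) (B : 'cV[R]_n).

Lemma uncontrollable_stable (a p : {poly R}) :
  stabilizable A B -> char_poly A = a * p ->
  (forall K, exists g, feedback_poly A B K = a * g) ->
  forall z, root (map_poly rc a) z -> cabs z < 1.
Proof.
move=> [K0 K0_stable] char_eq feedback_eq z az; have [g g_eq] := feedback_eq K0.
apply: K0_stable; rewrite mem_eigs cmxE map_mxB map_mxM -[_ *m _]scale1r.
rewrite char_poly_map_feedback g_eq char_eq polyC1 mul1r.
by rewrite -rmorphD -mulrDr rmorphM rootM az.
Qed.

Lemma unstable_eigs_factor (a p : {poly R}) : p \is monic -> char_poly A = a * p ->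
  (forall z, root (map_poly rc a) z -> cabs z < 1) ->
  \prod_(z <- eigs (cmx A) | 1 <= cabs z) cabs z =
  \prod_(z <- poly_roots (map_poly rc p) | 1 <= cabs z) cabs z.
Proof.
move=> p_monic char_eq a_stable.
have a_monic : a \is monic by rewrite -(monicMr _ p_monic) -char_eq char_poly_monic.
have [ac_monic pc_monic] := (map_monic rc a, map_monic rc p).
rewrite -ac_monic in a_monic; rewrite -pc_monic in p_monic.
have eigs_perm : perm_eq (eigs (cmx A))
    (poly_roots (map_poly rc a) ++ poly_roots (map_poly rc p)).
  apply: prod_XsubC_eq; rewrite big_cat -!poly_rootsE ?char_poly_monic //.
  by rewrite cmxE -map_char_poly char_eq rmorphM.
rewrite (perm_big _ eigs_perm) big_cat /= big1_seq ?mul1r // => z /andP [z_ge1].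
by rewrite -root_poly_roots // => /a_stable; rewrite ltNge z_ge1.
Qed.

Lemma disk_stabilizing_gain (M : R) : stabilizable A B ->
  \prod_(z <- eigs (cmx A) | 1 <= cabs z) cabs z < M ->
  exists K : 'rV[R]_n, forall s : R[i], M * cabs (1 - s) < 1 ->
    schur_stable (cmx A - s *: (cmx B *m cmx K)).
Proof.
move=> stabAB unst_lt.
have M_gt1 : 1 < M by apply: le_lt_trans unst_lt; apply: prod_cabs_ge1.
have [p [a [r [p_monic size_p char_eq feedback_dvd feedback_onto]]]] :=
  controllable_decomposition A B.
have a_stable := uncontrollable_stable stabAB char_eq feedback_dvd.
rewrite (unstable_eigs_factor p_monic char_eq a_stable) in unst_lt.
have [d [d_monic size_d d_stable pd_bound]] := exists_target_poly p_monic unst_lt.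
pose c := M ^+ 2 / (M ^+ 2 - 1).
have [|K feedback_K] := feedback_onto (c *: (d - p)).
  rewrite -ltnS -size_p (leq_ltn_trans (size_scale_leq _ _)) // -size_d.
  exact: size_monicB_lt.
exists K => s s_sens z; rewrite mem_eigs !cmxE char_poly_map_feedback.
rewrite feedback_K char_eq !rmorphM /= map_polyZ rmorphB /=.
set ac := map_poly rc a; set pc := map_poly rc p; set dc := map_poly rc d.
have -> : ac * pc + s%:P * (ac * (c%:C *: (dc - pc)))
          = ac * (pc + (c%:C * s)%:P * (dc - pc)) by rewrite -mul_polyC polyCM; ring.
rewrite rootM => /orP [/a_stable // |].
exact: root_homotopy_stable d_stable pd_bound (sensitivity_scale M_gt1 s_sens) z.
Qed.

End Stabilization.

Lemma cmxZ (R : rcfType) m n (c : R) (M : 'M[R]_(m, n)) : cmx (c *: M) = c%:C%C *: cmx M.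
Proof. by apply/matrixP => i j; rewrite !mxE rmorphM. Qed.

Lemma cmx0 (R : rcfType) m n : cmx (0 : 'M[R]_(m, n)) = 0.
Proof. by rewrite cmxE raddf0. Qed.

Lemma exists_gt_mul_lt1 (R : realFieldType) (M y : R) : 0 <= y -> M * y < 1 ->
  exists2 M', M < M' & M' * y < 1.
Proof.
move=> y_ge0 My_lt1; pose t := (1 - M * y) / (y + 1).
have t_gt0 : 0 < t by rewrite divr_gt0 ?subr_gt0 // ltr_wpDl.
have ty : t * (y + 1) = 1 - M * y by rewrite divfK // gt_eqF // ltr_wpDl.
by exists (M + t); [rewrite ltrDl | nra].
Qed.

Local Close Scope complex_scope.
Local Open Scope classical_set_scope.

Lemma lap_gamma_witness (R : realType) N (L : 'M[R]_N) (M : R) : 0 < M ->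
  M * lap_gamma L < 1 ->
  exists w : R, M * \big[Num.max/0]_(z <- lap_eigs_nz L) cabs (1 - w%:C%C * z) < 1.
Proof.
move=> M_gt0; rewrite mulrC -ltr_pdivlMr // mul1r => /inf_lt [].
  by exists (\big[Num.max/0]_(z <- lap_eigs_nz L) cabs (1 - 0%:C%C * z)), 0.
by move=> _ [w ->]; exists w; rewrite mulrC -ltr_pdivlMr // mul1r.
Qed.

Theorem theorem2 (R : realType) (n N : nat)
    (A : 'M[R]_n) (B : 'M[R]_(n, 1)) (Ad : 'M[R]_N) :
  (forall i : 'I_N, Ad i i = 0) ->
  (forall i j : 'I_N, 0 <= Ad i j) ->
  stabilizable A B ->
  unstable_prod A * lap_gamma (laplacian Ad) < 1 ->
  exists K : 'M[R]_(1, n),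
    forall lam : R[i], lam \in lap_eigs_nz (laplacian Ad) ->
      schur_stable (cmx A - lam *: (cmx B *m cmx K)).
Proof.
move=> _ _ stabAB gamma_lt.
case: n A B stabAB gamma_lt => [|n'] A B stabAB gamma_lt.
  by exists 0 => lam _; apply: schur_stable0.
have [A_unstable | /hasPn A_stable] :=
  boolP (has (fun z => 1 <= cabs z) (eigs (cmx A))); last first.
  exists 0 => lam _ z; rewrite cmx0 mulmx0 scaler0 subr0 => /A_stable.
  by rewrite ltNge.
rewrite /unstable_prod /= A_unstable in gamma_lt.
set U := bigop.body _ _ _ in gamma_lt.
have U_gt0 : 0 < U by apply: lt_le_trans (prod_cabs_ge1 _).
have [w Uw_lt] := lap_gamma_witness U_gt0 gamma_lt.
have [M UM Mw_lt] := exists_gt_mul_lt1 (bigmax_ge_id _ _ _ _) Uw_lt.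
have [K K_stable] := disk_stabilizing_gain stabAB UM.
exists (w *: K) => lam lam_in; rewrite cmxZ -scalemxAr scalerA; apply: K_stable.
apply: le_lt_trans Mw_lt; apply: ler_wpM2l; first exact: ltW (lt_trans U_gt0 UM).
by rewrite mulrC; apply: le_bigmax_seq lam_in _.
Qed.
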